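(* Let $a>0$, $\epsilon>0$, $n\in\mathbb{N}$, $\sigma_n=n^{-a}$, and let $A_n(q_1,\dot q_1)=\frac12|\dot q_1|^2+\sigma_n(1-\cos q_1)$ on $\mathbb{R}$. Let $t_0<t_2$ and $\bar t_1,\tilde t_1\in(t_0,t_2)$. Let $\bar q_1$ be a solution of the Euler–Lagrange equation of $A_n$ on $(t_0,\bar t_1)$ and on $(\bar t_1,t_2)$ with $\bar q_1(t_0)=0$, $\bar q_1(\bar t_1)=\pi$, $\bar q_1(t_2)=2\pi$, and let $\tilde q_1$ be a solution of the Euler–Lagrange equation of $A_n$ on $(t_0,\tilde t_1)$ and on $(\tilde t_1,t_2)$ with $\tilde q_1(t_0)=0$, $\tilde q_1(\tilde t_1)=\pi$, $\tilde q_1(t_2)=2\pi$. Let $\bar\omega_1'=\pi/(\bar t_1-t_0)$, $\bar\omega_1''=\pi/(t_2-\bar t_1)$, $\tilde\omega_1'=\pi/(\tilde t_1-t_0)$, $\tilde\omega_1''=\pi/(t_2-\tilde t_1)$ be the corresponding average speeds and $|\omega_1|=\max\{|\bar\omega_1'|,|\bar\omega_1''|,|\tilde\omega_1'|,|\tilde\omega_1''|\}$. If $|\omega_1|<n^{-\frac a2-\epsilon}$, then $$\Big|\int_{t_0}^{t_2}A_n(\bar q_1,\dot{\bar q}_1)\,dt-\int_{t_0}^{t_2}A_n(\tilde q_1,\dot{\tilde q}_1)\,dt\Big|\le C_1|\bar t_1-\tilde t_1|\,\sigma_n\exp\Big(-\frac{C_2\sqrt{\sigma_n}}{|\omega_1|}\Big),$$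 where $C_1,C_2$ are positive constants independent of $n$. *)

From Stdlib Require Import Reals.
From Coquelicot Require Import Coquelicot.
Open Scope R_scope.

Definition sigma_n (a : R) (n : nat) : R := Rpower (INR n) (- a).

Definition Alag (s x v : R) : R := / 2 * v ^ 2 + s * (1 - cos x).

(* q solves the Euler-Lagrange equation of A (with sigma = s) on the open
   interval (t, t'):  d/dt (dA/dv) = dA/dx,  i.e.  q'' = s * sin q. *)
Definition EL_sol (s : R) (q : R -> R) (t t' : R) : Prop :=
  forall u, t < u < t' ->
    ex_derive q u /\ is_derive (Derive q) u (s * sin (q u)).

Definition broken_sol (s : R) (q : R -> R) (t0 t1 t2 : R) : Prop :=
  continuous_on (fun t => t0 <= t <= t2) q /\
  EL_sol s q t0 t1 /\ EL_sol s q t1 t2 /\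
  q t0 = 0 /\ q t1 = PI /\ q t2 = 2 * PI.

Definition action (s : R) (q : R -> R) (t0 t2 : R) : R :=
  RInt (fun t => Alag s (q t) (Derive q t)) t0 t2.

(* Each arc of a broken solution is half a revolution of the pendulum q'' = s sin q at some
   energy H > 0 (H = 0 is the separatrix, which takes infinite time). Along it
   q' = v_H(q) with v_H(x) = sqrt(2H + 2s(1 - cos x)), so the arc lasts T(H) = int_0^pi 1/v_H
   and its action is F(H) - H T(H), where F(H) = int_0^pi v_H. As F is concave with F' = T,
   the actions of two arcs differ by at most max(H, H') |T(H) - T(H')|. Finally
   1 - cos x >= x^2/18 on [0, pi] bounds T(H) by an explicit logarithm, which gives
   H <= 8 s exp(-(2/3) sqrt s T(H)); every arc lasts at least pi/|omega_1| and
   |omega_1| < sqrt s = n^(-a/2), so H <= 8 s exp(-sqrt s/|omega_1|). *)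

From Stdlib Require Import Reals Lra Psatz.
From Coquelicot Require Import Coquelicot.
Open Scope R_scope.

Ltac simpl_R_ops := unfold minus, plus, opp, zero, scal, mult; cbn -[Rinv RInt];
  try change (RinvImpl.Rinv 2) with (/ 2).

Lemma continuity_pt_of_continuous (f : R -> R) x : continuous f x -> continuity_pt f x.
Proof. now intros; apply continuity_pt_filterlim. Qed.

Lemma continuous_of_is_derive (f : R -> R) x l : is_derive f x l -> continuous f x.
Proof. intros Hf; apply (@ex_derive_continuous R_AbsRing R_NormedModule); now exists l. Qed.

Lemma continuous_comp_ex_derive (f g : R -> R) x :
  continuous g x -> (forall y, ex_derive f y) -> continuous (fun t => f (g t)) x.
Proof.
  intros Hg Hf; apply (continuous_comp g f); auto.
  now apply (@ex_derive_continuous R_AbsRing R_NormedModule).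
Qed.

Lemma exp_le x y : x <= y -> exp x <= exp y.
Proof.
  intros [Hxy | ->]; [now apply Rlt_le, exp_increasing | apply Rle_refl].
Qed.

Section DeriveSign.
Variables (f df : R -> R) (a b : R).
Hypothesis le_ab : a <= b.
Hypothesis f_cont : forall x, a <= x <= b -> continuous f x.
Hypothesis f_deriv : forall x, a < x < b -> is_derive f x (df x).

Lemma antitone_of_derive_nonpos : (forall x, a < x < b -> df x <= 0) -> f b <= f a.
Proof.
  intros Hneg.
  destruct (MVT_gen f a b (fun x => Rmin (df x) 0)) as [c [_ Hc]];
    rewrite ?Rmin_left, ?Rmax_right by lra.
  - intros x Hx; rewrite Rmin_left by now apply Hneg. now apply f_deriv.
  - now intros x Hx; apply continuity_pt_of_continuous, f_cont.
  - pose proof (Rmin_r (df c) 0); nra.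
Qed.

Lemma monotone_of_derive_nonneg : (forall x, a < x < b -> 0 <= df x) -> f a <= f b.
Proof.
  intros Hpos.
  destruct (MVT_gen f a b (fun x => Rmax (df x) 0)) as [c [_ Hc]];
    rewrite ?Rmin_left, ?Rmax_right by lra.
  - intros x Hx; rewrite Rmax_left by (specialize (Hpos x Hx); lra). now apply f_deriv.
  - now intros x Hx; apply continuity_pt_of_continuous, f_cont.
  - pose proof (Rmax_r (df c) 0); nra.
Qed.

Lemma const_of_derive_zero : (forall x, a < x < b -> df x = 0) -> f b = f a.
Proof.
  intros Hzero; apply Rle_antisym.
  - apply antitone_of_derive_nonpos; intros x Hx; rewrite Hzero; lra.
  - apply monotone_of_derive_nonneg; intros x Hx; rewrite Hzero; lra.
Qed.

End DeriveSign.

Lemma exp_weighted_antitone (f df : R -> R) K a b : a <= b ->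
  (forall x, a <= x <= b -> continuous f x) ->
  (forall x, a < x < b -> is_derive f x (df x)) ->
  (forall x, a < x < b -> df x <= K * f x) ->
  f b * exp (- K * b) <= f a * exp (- K * a).
Proof.
  intros Hab Hc Hd Hle.
  apply (antitone_of_derive_nonpos (fun t => f t * exp (- K * t))
           (fun t => exp (- K * t) * (df t - K * f t))); auto.
  - intros x Hx; apply (continuous_mult f (fun t => exp (- K * t))); auto.
    apply (@ex_derive_continuous R_AbsRing R_NormedModule); auto_derive; auto.
  - intros x Hx. evar (l : R).
    assert (Hl : is_derive (fun t => f t * exp (- K * t)) x l).
    { apply (is_derive_mult f); [now apply Hd | | now intros; apply Rmult_comm].
      apply (is_derive_comp exp); [apply is_derive_exp |].
      apply @is_derive_scal; apply @is_derive_id. }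
    replace (exp (- K * x) * (df x - K * f x)) with l; [exact Hl |].
    subst l; simpl_R_ops; ring.
  - intros x Hx. pose proof (exp_pos (- K * x)). specialize (Hle x Hx). nra.
Qed.

(* Gronwall's inequality, run in both time directions. *)
Lemma gronwall_zero_iff (f df : R -> R) K a b : a <= b ->
  (forall x, a <= x <= b -> continuous f x) ->
  (forall x, a < x < b -> is_derive f x (df x)) ->
  (forall x, a < x < b -> Rabs (df x) <= K * f x) ->
  0 <= f a -> 0 <= f b -> (f a = 0 <-> f b = 0).
Proof.
  intros Hab Hc Hd Hle Ha Hb.
  assert (Hfwd := exp_weighted_antitone f df K a b Hab Hc Hd
    ltac:(intros x Hx; specialize (Hle x Hx); apply Rabs_le_between in Hle; lra)).
  assert (Hbwd := exp_weighted_antitone (fun t => - f t) (fun t => - df t) (- K) a b Hab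
    ltac:(intros; apply (continuous_opp f); auto)
    ltac:(intros; apply (is_derive_opp f); auto)
    ltac:(intros x Hx; specialize (Hle x Hx); apply Rabs_le_between in Hle; lra)).
  pose proof (exp_pos (- K * a)); pose proof (exp_pos (- K * b)).
  pose proof (exp_pos (- - K * a)); pose proof (exp_pos (- - K * b)).
  split; intros Hzero; rewrite Hzero in *; nra.
Qed.

Lemma continuous_on_extension (c d : R) (f : R -> R) : c <= d ->
  continuous_on (fun t => c <= t <= d) f ->
  exists g : R -> R, (forall x, continuous g x) /\ (forall x, c <= x <= d -> g x = f x).
Proof.
  intros Hcd Hf.
  set (clamp := fun t => Rmax c (Rmin t d)).
  assert (clamp_in : forall t, c <= clamp t <= d)
    by (intros; unfold clamp, Rmax, Rmin; repeat destruct Rle_dec; lra).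
  assert (clamp_lip : forall x y, Rabs (clamp y - clamp x) <= Rabs (y - x))
    by (intros; unfold clamp, Rmax, Rmin; repeat destruct Rle_dec;
        unfold Rabs; repeat destruct Rcase_abs; lra).
  exists (fun t => f (clamp t)); split.
  - intros x.
    apply filterlim_comp with (G := within (fun t => c <= t <= d) (locally (clamp x))).
    + intros P [eps HP]; exists eps; intros y Hy; apply HP; [| apply clamp_in].
      eapply Rle_lt_trans; [apply clamp_lip | exact Hy].
    + apply Hf, clamp_in.
  - intros x Hx; f_equal; unfold clamp, Rmax, Rmin; repeat destruct Rle_dec; lra.
Qed.

Lemma continuous_nonzero_sign (f : R -> R) a b u v :
  (forall x, a < x < b -> continuous f x) -> (forall x, a < x < b -> f x <> 0) ->
  a < u < b -> a < v < b -> 0 < f u -> 0 < f v.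
Proof.
  intros Hc Hnz Hu Hv Hfu.
  destruct (Rlt_le_dec 0 (f v)) as [| Hfv]; auto.
  assert (Hneg : f v < 0) by (destruct Hfv; auto; exfalso; now apply (Hnz v)).
  exfalso; destruct (Rtotal_order u v) as [Huv | [-> | Hvu]]; try lra.
  - destruct (Ranalysis5.IVT_interv (- f)%F u v) as [z [Hz Hfz]]; auto.
    + intros; apply continuity_pt_opp, continuity_pt_of_continuous, Hc; lra.
    + unfold opp_fct; lra.
    + unfold opp_fct; lra.
    + apply (Hnz z); [lra | unfold opp_fct in Hfz; lra].
  - destruct (Ranalysis5.IVT_interv f v u) as [z [Hz Hfz]]; auto.
    + intros; apply continuity_pt_of_continuous, Hc; lra.
    + apply (Hnz z); [lra | auto].
Qed.

Lemma le_at_endpoint (p : R -> R) E a b e : a < b -> (e = a \/ e = b) -> continuous p e ->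
  (forall t, a < t < b -> E <= p t) -> E <= p e.
Proof.
  intros Hab He Hc Hle.
  destruct (Rle_lt_dec E (p e)) as [| Hlt]; auto; exfalso.
  assert (Heps : 0 < E - p e) by lra.
  destruct (Hc _ (locally_ball (p e) (mkposreal _ Heps))) as [d Hd].
  set (m := Rmin d (b - a) / 2).
  assert (Hm : 0 < m < d /\ m < b - a).
  { pose proof (cond_pos d); pose proof (Rmin_l d (b - a)); pose proof (Rmin_r d (b - a)).
    assert (0 < Rmin d (b - a)) by (apply Rmin_glb_lt; lra). unfold m; lra. }
  assert (Hnear : forall t, Rabs (t - e) < d -> a < t < b -> False).
  { intros t Ht Htab. specialize (Hd t Ht). specialize (Hle t Htab).
    revert Hd; unfold ball; simpl; unfold AbsRing_ball, abs, minus, plus, opp; simpl.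
    intros Hd; apply Rabs_lt_between in Hd; simpl in Hd; lra. }
  destruct He as [-> | ->].
  - apply (Hnear (a + m)); [rewrite Rabs_right |]; lra.
  - apply (Hnear (b - m)); [rewrite Rabs_left |]; lra.
Qed.

Lemma ex_RInt_of_continuous (f : R -> R) a b : (forall x, continuous f x) -> ex_RInt f a b.
Proof. intros; apply (@ex_RInt_continuous R_CompleteNormedModule); auto. Qed.

Lemma is_derive_RInt_upper (f : R -> R) a x : (forall y, continuous f y) ->
  is_derive (fun y => RInt f a y) x (f x).
Proof.
  intros Hc; apply is_derive_RInt with (a := a); auto.
  apply filter_forall; intros; apply (RInt_correct f), ex_RInt_of_continuous; auto.
Qed.

Lemma RInt_symmetric_reflect (f : R -> R) a m : (forall x, continuous f x) ->
  (forall x, f (2 * m - x) = f x) -> RInt f m (2 * m - a) = RInt f a m.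
Proof.
  intros Hc Hsym.
  pose proof (RInt_comp_lin f (-1) (2 * m) a m
    ltac:(apply ex_RInt_of_continuous; auto)) as Hlin.
  replace (-1 * a + 2 * m) with (2 * m - a) in Hlin by ring.
  replace (-1 * m + 2 * m) with m in Hlin by ring.
  rewrite <- (opp_RInt_swap f m) in Hlin by (apply ex_RInt_of_continuous; auto).
  rewrite (RInt_ext _ (fun y => opp (f y))) in Hlin.
  2: { intros x _; simpl_R_ops; replace (-1 * x + 2 * m) with (2 * m - x) by ring.
       rewrite Hsym; ring. }
  rewrite (@RInt_opp R_CompleteNormedModule) in Hlin by (apply ex_RInt_of_continuous; auto).
  revert Hlin; simpl_R_ops; lra.
Qed.

Lemma RInt_half_turn (f : R -> R) c : (forall x, continuous f x) ->
  (forall x, f (2 * PI - x) = f x) -> (c = 0 \/ c = PI) -> RInt f c (c + PI) = RInt f 0 PI.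
Proof.
  intros Hc Hsym [-> | ->]; [now rewrite Rplus_0_l |].
  rewrite <- (RInt_symmetric_reflect f 0 PI) by auto. f_equal; ring.
Qed.

(* Unlike [RInt_comp], [g] need only be differentiable on the open interval. *)
Lemma RInt_change_var (f g dg k : R -> R) a b : a <= b ->
  (forall x, continuous f x) -> (forall x, continuous g x) -> (forall x, continuous k x) ->
  (forall t, a < t < b -> is_derive g t (dg t)) ->
  (forall t, a < t < b -> f (g t) * dg t = k t) ->
  RInt k a b = RInt f (g a) (g b).
Proof.
  intros Hab Hf Hg Hk Hdg Hfk.
  assert (Hconst := const_of_derive_zero
    (fun t => RInt f (g a) (g t) - RInt k a t) (fun t => f (g t) * dg t - k t) a b Hab).
  cbv beta in Hconst; rewrite !(@RInt_point R_CompleteNormedModule) in Hconst.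
  revert Hconst; simpl_R_ops; intros Hconst; enough (RInt f (g a) (g b) - RInt k a b = 0) by lra.
  rewrite Hconst; [ring | | |].
  - intros x _; apply (continuous_minus (fun t => RInt f (g a) (g t)) (fun t => RInt k a t)).
    + apply (continuous_comp g (fun y => RInt f (g a) y)); auto.
      apply (continuous_of_is_derive _ _ (f (g x))), is_derive_RInt_upper; auto.
    + apply (continuous_of_is_derive _ _ (k x)), is_derive_RInt_upper; auto.
  - intros t Ht. evar (l : R).
    assert (Hl : is_derive (fun t => RInt f (g a) (g t) - RInt k a t) t l).
    { apply (is_derive_minus (fun t => RInt f (g a) (g t)) (fun t => RInt k a t)).
      - apply (is_derive_comp (fun y => RInt f (g a) y) g);
          [apply is_derive_RInt_upper | apply Hdg]; auto.
      - apply is_derive_RInt_upper; auto. }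
    replace (f (g t) * dg t - k t) with l; [exact Hl |]. subst l; simpl_R_ops; ring.
  - intros t Ht; rewrite Hfk; auto; lra.
Qed.

Lemma RInt_inv_sqrt_quadratic c k L : 0 < c -> 0 < k ->
  RInt (fun x => / sqrt (c + k ^ 2 * x ^ 2)) 0 L
  = (ln (k * L + sqrt (c + k ^ 2 * L ^ 2)) - ln (sqrt c)) / k.
Proof.
  intros Hc Hk.
  assert (Hrad : forall x, 0 < c + k ^ 2 * x ^ 2) by (intros; pose proof (pow2_ge_0 x); nra).
  assert (Hlog : forall x, 0 < k * x + sqrt (c + k ^ 2 * x ^ 2)).
  { intros x. enough (Rabs (k * x) < sqrt (c + k ^ 2 * x ^ 2))
      by (unfold Rabs in *; destruct Rcase_abs; lra).
    rewrite <- (sqrt_pow2 (Rabs (k * x))) by apply Rabs_pos.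
    apply sqrt_lt_1_alt; rewrite pow2_abs; split; [apply pow2_ge_0 | specialize (Hrad x); nra]. }
  set (G := fun x => ln (k * x + sqrt (c + k ^ 2 * x ^ 2)) / k).
  replace ((ln (k * L + sqrt (c + k ^ 2 * L ^ 2)) - ln (sqrt c)) / k) with (minus (G L) (G 0)).
  2: { unfold G; replace (k * 0 + sqrt (c + k ^ 2 * 0 ^ 2)) with (sqrt c)
         by (rewrite Rmult_0_r, Rplus_0_l; f_equal; ring).
       simpl_R_ops; field; lra. }
  apply is_RInt_unique, (@is_RInt_derive R_CompleteNormedModule G).
  - intros x _; unfold G; auto_derive.
    + specialize (Hrad x); specialize (Hlog x); simpl in *; repeat split; auto.
    + pose proof (Hrad x) as Hr; pose proof (Hlog x) as Hl; pose proof (sqrt_lt_R0 _ (Hrad x)).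
      simpl in *; field; repeat split; lra.
  - intros x _; apply (@ex_derive_continuous R_AbsRing R_NormedModule); auto_derive.
    specialize (Hrad x); simpl in Hrad; repeat split; auto.
    apply Rgt_not_eq, sqrt_lt_R0; auto.
Qed.

(** * Elementary bounds on [1 - cos] *)

Lemma sin_sqr_le y : sin y ^ 2 <= y ^ 2.
Proof.
  assert (Habs : forall z, 0 < z -> Rabs (sin z) <= z).
  { intros z Hz; pose proof (sin_lt_x z Hz); destruct (Rle_dec 1 z).
    - pose proof (SIN_bound z); unfold Rabs; destruct Rcase_abs; lra.
    - assert (0 < sin z) by (apply sin_gt_0; pose proof PI2_3_2; lra).
      rewrite Rabs_right; lra. }
  rewrite <- (pow2_abs (sin y)), <- (pow2_abs y).
  apply pow_incr; split; [apply Rabs_pos |].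
  destruct (Rtotal_order y 0) as [Hy | [-> | Hy]].
  - rewrite (Rabs_left y), <- Rabs_Ropp, <- sin_neg by lra. apply Habs; lra.
  - rewrite sin_0, Rabs_R0; lra.
  - rewrite (Rabs_right y) by lra; auto.
Qed.

Lemma one_minus_cos_half x : 1 - cos x = 2 * sin (x / 2) ^ 2.
Proof. replace x with (2 * (x / 2)) at 1 by field. rewrite cos_2a_sin. ring. Qed.

Lemma one_minus_cos_le x : 2 * (1 - cos x) <= x ^ 2.
Proof. rewrite one_minus_cos_half. pose proof (sin_sqr_le (x / 2)). nra. Qed.

Lemma sin_ge_third y : 0 <= y <= 2 -> y / 3 <= sin y.
Proof.
  intros Hy. pose proof (pre_sin_bound y 0 ltac:(lra) ltac:(lra)) as [Hlb _].
  unfold sin_approx, sin_term in Hlb. simpl in Hlb. nra.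
Qed.

Lemma one_minus_cos_ge x : 0 <= x <= PI -> x ^ 2 / 9 <= 2 * (1 - cos x).
Proof.
  intros Hx. rewrite one_minus_cos_half. pose proof PI_4.
  pose proof (sin_ge_third (x / 2) ltac:(lra)). nra.
Qed.

Lemma mul_le_add_sqrt r P E : 0 < r -> 0 < P -> 2 <= E ->
  E * r <= P + sqrt (r ^ 2 + P ^ 2) -> 3 * E * r <= 8 * P.
Proof.
  intros Hr HP HE Hle.
  destruct (Rle_lt_dec (E * r) P) as [| Hgt]; [nra |].
  assert (Hsq : (E * r - P) ^ 2 <= r ^ 2 + P ^ 2).
  { rewrite <- (pow2_sqrt (r ^ 2 + P ^ 2)) by nra. apply pow_incr; lra. }
  assert (Hlin : (E * E - 1) * r <= 2 * E * P) by (apply (Rmult_le_reg_l r); nra).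
  nra.
Qed.

(** * The pendulum [q'' = s sin q] *)

Section Pendulum.
Variable s : R.
Hypothesis s_pos : 0 < s.

Definition energy (x v : R) : R := / 2 * v ^ 2 - s * (1 - cos x).

Definition speed (H x : R) : R := sqrt (2 * H + 2 * s * (1 - cos x)).

Definition swing_time (H : R) : R := RInt (fun x => / speed H x) 0 PI.

Definition reduced_action (H : R) : R := RInt (speed H) 0 PI.

Lemma speed_radicand_pos H x : 0 < H -> 0 < 2 * H + 2 * s * (1 - cos x).
Proof. intros; pose proof (COS_bound x); nra. Qed.

Lemma speed_pos H x : 0 < H -> 0 < speed H x.
Proof. intros; apply sqrt_lt_R0, speed_radicand_pos; auto. Qed.

Lemma speed_sqr H x : 0 < H -> speed H x ^ 2 = 2 * H + 2 * s * (1 - cos x).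
Proof. intros; apply pow2_sqrt, Rlt_le, speed_radicand_pos; auto. Qed.

Lemma speed_reflect H x : speed H (2 * PI - x) = speed H x.
Proof. unfold speed; rewrite cos_minus, cos_2PI, sin_2PI; f_equal; ring. Qed.

Lemma continuous_speed H x : 0 < H -> continuous (speed H) x.
Proof.
  intros; apply (@ex_derive_continuous R_AbsRing R_NormedModule).
  unfold speed; auto_derive; apply speed_radicand_pos; auto.
Qed.

Lemma continuous_inv_speed H x : 0 < H -> continuous (fun x => / speed H x) x.
Proof.
  intros; apply (@ex_derive_continuous R_AbsRing R_NormedModule).
  unfold speed; auto_derive; repeat split; try apply speed_radicand_pos; auto.
  apply Rgt_not_eq, speed_pos; auto.
Qed.

Lemma swing_duration (q : R -> R) a b c H : a <= b -> 0 < H -> (c = 0 \/ c = PI) ->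
  (forall x, continuous q x) -> (forall u, a < u < b -> is_derive q u (speed H (q u))) ->
  q a = c -> q b = c + PI -> b - a = swing_time H.
Proof.
  intros Hab HHpos Hcase Hc Hd Ha Hb.
  unfold swing_time; rewrite <- (RInt_half_turn (fun x => / speed H x) c); auto.
  - rewrite <- Hb, <- Ha, <- (RInt_change_var (fun x => / speed H x) q (fun t => speed H (q t))
                               (fun _ => 1) a b); auto.
    + rewrite (@RInt_const R_CompleteNormedModule); simpl_R_ops; ring.
    + intros; apply continuous_inv_speed; auto.
    + intros; apply continuous_const.
    + intros; field; apply Rgt_not_eq, speed_pos; auto.
  - intros; apply continuous_inv_speed; auto.
  - intros; now rewrite speed_reflect.
Qed.

Lemma swing_action (q dq : R -> R) a b c H : a <= b -> 0 < H -> (c = 0 \/ c = PI) ->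
  (forall x, continuous q x) -> (forall u, a < u < b -> is_derive q u (dq u)) ->
  (forall u, a < u < b -> dq u = speed H (q u)) -> q a = c -> q b = c + PI ->
  ex_RInt (fun t => Alag s (q t) (dq t)) a b /\
  RInt (fun t => Alag s (q t) (dq t)) a b = reduced_action H - H * (b - a).
Proof.
  intros Hab HHpos Hcase Hc Hd Hdq Ha Hb.
  set (k := fun t => speed H (q t) ^ 2).
  assert (Hk : forall x, continuous k x).
  { intros x; apply (continuous_comp_ex_derive (fun y => speed H y ^ 2) q); auto.
    intros y; unfold speed; auto_derive; apply speed_radicand_pos; auto. }
  assert (HL : forall t, Rmin a b < t < Rmax a b -> k t - H = Alag s (q t) (dq t)).
  { rewrite Rmin_left, Rmax_right by lra. intros t Ht.
    unfold k, Alag; rewrite (Hdq t Ht), speed_sqr by auto; field. }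
  assert (Hex : ex_RInt (fun t => k t - H) a b)
    by (apply ex_RInt_of_continuous; intros; apply (continuous_minus k (fun _ => H)); auto;
        apply continuous_const).
  split; [now apply (ex_RInt_ext _ _ a b HL) |].
  rewrite <- (RInt_ext _ _ a b HL).
  rewrite (RInt_minus k (fun _ => H)) by (apply ex_RInt_of_continuous; auto using continuous_const).
  rewrite (@RInt_const R_CompleteNormedModule).
  rewrite (RInt_change_var (speed H) q dq k a b); auto.
  - rewrite Ha, Hb, RInt_half_turn; auto.
    + simpl_R_ops; unfold reduced_action; ring.
    + intros; apply continuous_speed; auto.
    + intros; apply speed_reflect.
  - intros; apply continuous_speed; auto.
  - intros t Ht; unfold k; rewrite Hdq; auto; ring.
Qed.

Section Solution.
Variables (q dq : R -> R) (a b : R).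
Hypothesis lt_ab : a < b.
Hypothesis q_cont : forall x, continuous q x.
Hypothesis q_deriv : forall u, a < u < b -> is_derive q u (dq u).
Hypothesis dq_deriv : forall u, a < u < b -> is_derive dq u (s * sin (q u)).

Lemma energy_conserved : exists H, forall u, a < u < b -> energy (q u) (dq u) = H.
Proof.
  set (E := fun u => energy (q u) (dq u)).
  assert (HE : forall u, a < u < b -> is_derive E u 0).
  { intros u Hu; evar (l : R).
    assert (Hl : is_derive E u l).
    { apply (is_derive_minus (fun u => / 2 * dq u ^ 2) (fun u => s * (1 - cos (q u)))).
      - apply @is_derive_scal, is_derive_pow, dq_deriv; auto.
      - apply @is_derive_scal, (is_derive_minus (fun _ => 1) (fun u => cos (q u))).
        + apply @is_derive_const.
        + apply (is_derive_comp cos q); [apply is_derive_cos | apply q_deriv; auto]. }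
    replace 0 with l; [exact Hl |]; subst l; simpl_R_ops; field. }
  set (m := (a + b) / 2).
  assert (HEc : forall x, a < x < b -> continuous E x)
    by (intros x Hx; apply (continuous_of_is_derive E x 0), HE; auto).
  exists (E m); intros u Hu; fold (E u).
  destruct (Rle_lt_dec u m).
  - symmetry; apply (const_of_derive_zero E (fun _ => 0)); auto;
      [intros; apply HEc; unfold m in *; lra | intros; apply HE; unfold m in *; lra].
  - apply (const_of_derive_zero E (fun _ => 0)); auto; try lra;
      [intros; apply HEc; unfold m in *; lra | intros; apply HE; unfold m in *; lra].
Qed.

Lemma energy_nonneg_at_equilibrium e H : (e = a \/ e = b) -> cos (q e) = 1 ->
  (forall u, a < u < b -> energy (q u) (dq u) = H) -> 0 <= H.
Proof.
  intros He Hcos HH.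
  enough (- H <= s * (1 - cos (q e))) by (rewrite Hcos in *; lra).
  apply (le_at_endpoint (fun t => s * (1 - cos (q t))) (- H) a b e lt_ab He).
  - apply (continuous_comp_ex_derive (fun y => s * (1 - cos y)) q); auto.
    intros; auto_derive; auto.
  - intros t Ht; rewrite <- (HH t Ht); unfold energy; pose proof (pow2_ge_0 (dq t)); lra.
Qed.

(* On the separatrix [|q'| <= sqrt s |q - c|] near an equilibrium [c], so by Gronwall it is
   never reached in finite time. *)
Lemma zero_energy_equilibrium c : cos c = 1 ->
  (forall u, a < u < b -> energy (q u) (dq u) = 0) -> (q a = c <-> q b = c).
Proof.
  intros Hc HH.
  assert (Hsqrt : sqrt s ^ 2 = s) by (apply pow2_sqrt; lra).
  assert (Hsinc : sin c = 0) by (pose proof (sin2_cos2 c); rewrite Hc in *; unfold Rsqr in *; nra).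
  assert (Hbound : forall u, a < u < b ->
            Rabs (2 * (q u - c) * dq u) <= 2 * sqrt s * (q u - c) ^ 2).
  { intros u Hu.
    assert (Hdq : dq u ^ 2 <= s * (q u - c) ^ 2).
    { specialize (HH u Hu); unfold energy in HH.
      pose proof (one_minus_cos_le (q u - c)).
      rewrite cos_minus, Hc, Hsinc in *. nra. }
    rewrite <- (Rabs_right (2 * sqrt s * (q u - c) ^ 2))
      by (apply Rle_ge, Rmult_le_pos; [pose proof (sqrt_pos s); lra | apply pow2_ge_0]).
    apply Rsqr_le_abs_0; unfold Rsqr.
    replace (2 * (q u - c) * dq u * (2 * (q u - c) * dq u))
      with (4 * (q u - c) ^ 2 * dq u ^ 2) by ring.
    replace (2 * sqrt s * (q u - c) ^ 2 * (2 * sqrt s * (q u - c) ^ 2))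
      with (4 * (q u - c) ^ 2 * (sqrt s ^ 2 * (q u - c) ^ 2)) by ring.
    rewrite Hsqrt; apply Rmult_le_compat_l; auto.
    pose proof (pow2_ge_0 (q u - c)); lra. }
  assert (Hiff := gronwall_zero_iff (fun t => (q t - c) ^ 2) (fun t => 2 * (q t - c) * dq t)
                    (2 * sqrt s) a b (Rlt_le _ _ lt_ab)).
  assert (Hsq0 : forall x, (x - c) ^ 2 = 0 <-> x = c)
    by (intros x; split; intros Hx; [enough (x - c = 0) by lra; apply Rsqr_0_uniq; unfold Rsqr; lra | rewrite Hx; ring]).
  rewrite <- (Hsq0 (q a)), <- (Hsq0 (q b)).
  apply Hiff; auto using pow2_ge_0.
  - intros x _; apply (continuous_comp_ex_derive (fun y => (y - c) ^ 2) q); auto.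
    intros; auto_derive; auto.
  - intros x Hx; evar (l : R).
    assert (Hl : is_derive (fun t => (q t - c) ^ 2) x l).
    { apply is_derive_pow, (is_derive_minus q (fun _ => c)); [apply q_deriv; auto |].
      apply @is_derive_const. }
    replace (2 * (q x - c) * dq x) with l; [exact Hl |]; subst l; simpl_R_ops; ring.
Qed.

Lemma energy_pos c H : (c = 0 \/ c = PI) -> q a = c -> q b = c + PI ->
  (forall u, a < u < b -> energy (q u) (dq u) = H) -> 0 < H.
Proof.
  intros Hcase Ha Hb HH. pose proof PI_RGT_0.
  assert (Hcos2PI : cos (PI + PI) = 1) by (replace (PI + PI) with (2 * PI) by ring; apply cos_2PI).
  assert (Hnonneg : 0 <= H).
  { destruct Hcase as [-> | ->].
    - apply (energy_nonneg_at_equilibrium a); auto. rewrite Ha; apply cos_0.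
    - apply (energy_nonneg_at_equilibrium b); auto. now rewrite Hb. }
  destruct Hnonneg as [| <-]; auto; exfalso.
  destruct Hcase as [-> | ->].
  - pose proof (proj1 (zero_energy_equilibrium 0 cos_0 HH) Ha); lra.
  - pose proof (proj2 (zero_energy_equilibrium (PI + PI) Hcos2PI HH) Hb); lra.
Qed.

Lemma velocity_eq_speed H : 0 < H -> q a < q b ->
  (forall u, a < u < b -> energy (q u) (dq u) = H) -> forall u, a < u < b -> dq u = speed H (q u).
Proof.
  intros HHpos Hqab HH.
  assert (Hnz : forall u, a < u < b -> - dq u <> 0).
  { intros u Hu Hz. specialize (HH u Hu); unfold energy in HH.
    pose proof (COS_bound (q u)). replace (dq u) with 0 in HH by lra. nra. }
  assert (Hpos : forall u, a < u < b -> 0 < dq u).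
  { intros u0 Hu0; destruct (Rlt_le_dec 0 (dq u0)) as [| Hneg]; auto; exfalso.
    assert (Hall : forall u, a < u < b -> dq u <= 0).
    { intros u Hu; enough (0 < - dq u) by lra.
      apply (continuous_nonzero_sign (fun t => - dq t) a b u0); auto.
      - intros x Hx; apply (continuous_opp dq), (continuous_of_is_derive dq x (s * sin (q x))).
        apply dq_deriv; auto.
      - specialize (Hnz u0 Hu0); lra. }
    pose proof (antitone_of_derive_nonpos q dq a b (Rlt_le _ _ lt_ab)
                  (fun x _ => q_cont x) q_deriv Hall); lra. }
  intros u Hu; unfold speed.
  rewrite <- (sqrt_pow2 (dq u)) by (apply Rlt_le, Hpos; auto).
  f_equal. specialize (HH u Hu); unfold energy in HH; lra.
Qed.

Lemma half_swing c : (c = 0 \/ c = PI) -> q a = c -> q b = c + PI ->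
  exists H, 0 < H /\ b - a = swing_time H /\
    ex_RInt (fun t => Alag s (q t) (dq t)) a b /\
    RInt (fun t => Alag s (q t) (dq t)) a b = reduced_action H - H * (b - a).
Proof.
  intros Hcase Ha Hb. pose proof PI_RGT_0 as Hpi.
  destruct energy_conserved as [H HH].
  assert (HHpos : 0 < H) by (apply (energy_pos c); auto).
  assert (Hv := velocity_eq_speed H HHpos ltac:(lra) HH).
  exists H; split; [| split].
  - exact HHpos.
  - apply (swing_duration q a b c); auto; try lra.
    intros u Hu; rewrite <- Hv; auto.
  - apply (swing_action q dq a b c); auto; lra.
Qed.

End Solution.

Lemma speed_sub_le Hi Hj x : 0 < Hi -> 0 < Hj ->
  speed Hi x - speed Hj x <= (Hi - Hj) / speed Hj x.
Proof.
  intros Hi_pos Hj_pos.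
  pose proof (speed_sqr Hi x Hi_pos); pose proof (speed_sqr Hj x Hj_pos).
  pose proof (speed_pos Hj x Hj_pos).
  apply (Rmult_le_reg_r (speed Hj x)); auto.
  unfold Rdiv; rewrite Rmult_assoc, Rinv_l, Rmult_1_r by lra.
  set (p := speed Hi x) in *; set (q := speed Hj x) in *.
  replace ((p - q) * q) with ((p ^ 2 - q ^ 2) / 2 - (p - q) ^ 2 / 2) by field.
  pose proof (pow2_ge_0 (p - q)); lra.
Qed.

(* [reduced_action] is concave with derivative [swing_time]; this is its tangent-line inequality. *)
Lemma reduced_action_sub_le Hi Hj : 0 < Hi -> 0 < Hj ->
  reduced_action Hi - reduced_action Hj <= (Hi - Hj) * swing_time Hj.
Proof.
  intros Hi_pos Hj_pos. pose proof PI_RGT_0.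
  assert (Hex : forall H, 0 < H -> ex_RInt (speed H) 0 PI)
    by (intros; apply ex_RInt_of_continuous; intros; apply continuous_speed; auto).
  assert (Hexinv : ex_RInt (fun x => / speed Hj x) 0 PI)
    by (apply ex_RInt_of_continuous; intros; apply continuous_inv_speed; auto).
  assert (Hle : RInt (fun x => speed Hi x - speed Hj x) 0 PI
                <= RInt (fun x => (Hi - Hj) * / speed Hj x) 0 PI).
  { apply RInt_le; [lra | | |].
    - apply (ex_RInt_minus (V := R_NormedModule)); auto.
    - apply (ex_RInt_scal (V := R_NormedModule)); auto.
    - intros x _; apply speed_sub_le; auto. }
  rewrite (RInt_minus (V := R_CompleteNormedModule) (speed Hi) (speed Hj)) in Hle by auto.
  rewrite (RInt_scal (V := R_CompleteNormedModule) (fun x => / speed Hj x)) in Hle by auto.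
  exact Hle.
Qed.

Lemma swing_action_diff_le H1 H2 : 0 < H1 -> 0 < H2 ->
  Rabs ((reduced_action H1 - H1 * swing_time H1) - (reduced_action H2 - H2 * swing_time H2))
  <= Rmax H1 H2 * Rabs (swing_time H1 - swing_time H2).
Proof.
  intros H1_pos H2_pos.
  pose proof (reduced_action_sub_le H1 H2 H1_pos H2_pos).
  pose proof (reduced_action_sub_le H2 H1 H2_pos H1_pos).
  pose proof (Rmax_l H1 H2); pose proof (Rmax_r H1 H2).
  set (M := Rmax H1 H2) in *; set (T1 := swing_time H1) in *; set (T2 := swing_time H2) in *.
  set (F1 := reduced_action H1) in *; set (F2 := reduced_action H2) in *.
  unfold Rabs; repeat destruct Rcase_abs; nra.
Qed.

Lemma swing_time_le H : 0 < H ->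
  swing_time H <= RInt (fun x => / sqrt (2 * H + (sqrt s / 3) ^ 2 * x ^ 2)) 0 PI.
Proof.
  intros HH. pose proof PI_RGT_0.
  assert (Hk : (sqrt s / 3) ^ 2 = s / 9)
    by (replace ((sqrt s / 3) ^ 2) with (sqrt s ^ 2 / 9) by field; rewrite pow2_sqrt; lra).
  assert (Hrad : forall x, 0 < 2 * H + (sqrt s / 3) ^ 2 * x ^ 2)
    by (intros; rewrite Hk; pose proof (pow2_ge_0 x); nra).
  apply RInt_le; [lra | | |].
  - apply ex_RInt_of_continuous; intros; apply continuous_inv_speed; auto.
  - apply ex_RInt_of_continuous; intros x.
    apply (@ex_derive_continuous R_AbsRing R_NormedModule); auto_derive.
    specialize (Hrad x); simpl in Hrad; repeat split; auto.
    apply Rgt_not_eq, sqrt_lt_R0; auto.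
  - intros x Hx; apply Rinv_le_contravar; [apply sqrt_lt_R0; auto |].
    unfold speed; apply sqrt_le_1_alt; rewrite Hk.
    pose proof (one_minus_cos_ge x ltac:(lra)); nra.
Qed.

Lemma exp_swing_time_le H : 0 < H ->
  exp (sqrt s / 3 * swing_time H) * sqrt (2 * H)
  <= sqrt s / 3 * PI + sqrt (sqrt (2 * H) ^ 2 + (sqrt s / 3 * PI) ^ 2).
Proof.
  intros HH. set (k := sqrt s / 3). pose proof PI_RGT_0.
  assert (Hk : 0 < k) by (unfold k; pose proof (sqrt_lt_R0 s s_pos); lra).
  assert (Hr : 0 < sqrt (2 * H)) by (apply sqrt_lt_R0; lra).
  set (A := k * PI + sqrt (2 * H + k ^ 2 * PI ^ 2)).
  assert (HA : 0 < A) by (unfold A; pose proof (sqrt_pos (2 * H + k ^ 2 * PI ^ 2)); nra).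
  assert (HT : k * swing_time H <= ln A - ln (sqrt (2 * H))).
  { pose proof (swing_time_le H HH) as Hle; fold k in Hle.
    rewrite (RInt_inv_sqrt_quadratic (2 * H) k PI) in Hle by lra.
    fold A in Hle. apply (Rmult_le_compat_l k) in Hle; [| lra].
    replace (k * ((ln A - ln (sqrt (2 * H))) / k)) with (ln A - ln (sqrt (2 * H))) in Hle
      by (field; lra).
    exact Hle. }
  apply exp_le in HT. unfold Rminus in HT.
  rewrite exp_plus, exp_Ropp, !exp_ln in HT by auto.
  rewrite pow2_sqrt by lra; replace ((k * PI) ^ 2) with (k ^ 2 * PI ^ 2) by ring; fold A.
  apply (Rmult_le_compat_r (sqrt (2 * H))) in HT; [| lra].
  replace (A * / sqrt (2 * H) * sqrt (2 * H)) with A in HT by (field; lra). exact HT.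
Qed.

Lemma energy_le_exp_swing_time H : 0 < H -> 3 <= sqrt s * swing_time H ->
  H <= 8 * s * exp (- (2 / 3) * (sqrt s * swing_time H)).
Proof.
  intros HH HT. pose proof PI_RGT_0; pose proof PI_4.
  set (E := exp (sqrt s / 3 * swing_time H)).
  assert (HE : 2 <= E) by (unfold E; pose proof (exp_ineq1_le (sqrt s / 3 * swing_time H)); lra).
  assert (Hexp : exp (- (2 / 3) * (sqrt s * swing_time H)) = / (E * E)).
  { replace (- (2 / 3) * (sqrt s * swing_time H))
      with (- (sqrt s / 3 * swing_time H) + - (sqrt s / 3 * swing_time H)) by field.
    rewrite exp_plus, exp_Ropp; unfold E; field; apply Rgt_not_eq, exp_pos. }
  assert (Hbound := mul_le_add_sqrt (sqrt (2 * H)) (sqrt s / 3 * PI) E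
    ltac:(apply sqrt_lt_R0; lra)
    ltac:(pose proof (sqrt_lt_R0 s s_pos); nra) HE (exp_swing_time_le H HH)).
  assert (Hsq : (3 * E * sqrt (2 * H)) ^ 2 <= (8 * (sqrt s / 3 * PI)) ^ 2)
    by (apply pow_incr; split; [pose proof (sqrt_pos (2 * H)); nra | lra]).
  replace ((3 * E * sqrt (2 * H)) ^ 2) with (9 * E ^ 2 * sqrt (2 * H) ^ 2) in Hsq by ring.
  replace ((8 * (sqrt s / 3 * PI)) ^ 2) with (64 / 9 * sqrt s ^ 2 * PI ^ 2) in Hsq by field.
  rewrite !pow2_sqrt in Hsq by lra.
  rewrite Hexp; apply (Rmult_le_reg_l (E * E)); [nra |].
  replace (E * E * (8 * s * / (E * E))) with (8 * s) by (field; nra).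
  assert (PI ^ 2 <= 16) by nra.
  assert (s * PI ^ 2 <= 16 * s) by nra.
  replace (E ^ 2) with (E * E) in Hsq by ring. nra.
Qed.

Lemma energy_le_of_average_speed H om : 0 < H -> 0 < om < sqrt s -> PI <= om * swing_time H ->
  H <= 8 * s * exp (- (sqrt s / om)).
Proof.
  intros HH Hom HT. pose proof PI2_3_2.
  assert (Hsqrt : 0 < sqrt s) by (apply sqrt_lt_R0; auto).
  assert (Hlong : PI * sqrt s <= om * (sqrt s * swing_time H)) by nra.
  apply (Rle_trans _ _ _ (energy_le_exp_swing_time H HH ltac:(nra))).
  apply Rmult_le_compat_l; [lra | apply exp_le].
  apply (Rmult_le_reg_l om); [lra |].
  replace (om * - (sqrt s / om)) with (- sqrt s) by (field; lra). nra.
Qed.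

End Pendulum.

Lemma EL_sol_half_swing s q a b c : 0 < s -> a < b ->
  continuous_on (fun t => a <= t <= b) q -> EL_sol s q a b ->
  (c = 0 \/ c = PI) -> q a = c -> q b = c + PI ->
  exists H, 0 < H /\ b - a = swing_time s H /\
    ex_RInt (fun t => Alag s (q t) (Derive q t)) a b /\
    RInt (fun t => Alag s (q t) (Derive q t)) a b = reduced_action s H - H * (b - a).
Proof.
  intros Hs Hab Hcont HEL Hcase Ha Hb.
  destruct (continuous_on_extension a b q (Rlt_le _ _ Hab) Hcont) as [qe [Hqe Heq]].
  assert (Hnear : forall u, a < u < b -> locally u (fun t => q t = qe t)).
  { intros u Hu.
    assert (Hd : 0 < Rmin (u - a) (b - u)) by (apply Rmin_glb_lt; lra).
    exists (mkposreal _ Hd); intros t Ht; simpl in Ht.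
    revert Ht; unfold ball; simpl; unfold AbsRing_ball, abs, minus, plus, opp; simpl.
    intros Ht; apply Rabs_lt_between in Ht.
    pose proof (Rmin_l (u - a) (b - u)); pose proof (Rmin_r (u - a) (b - u)).
    symmetry; apply Heq; lra. }
  assert (Hin : forall t, Rmin a b < t < Rmax a b ->
            Alag s (qe t) (Derive q t) = Alag s (q t) (Derive q t)).
  { rewrite Rmin_left, Rmax_right by lra; intros t Ht; rewrite Heq; auto; lra. }
  destruct (half_swing s Hs qe (Derive q) a b Hab Hqe) with (c := c)
    as [H [HH [HT [Hex Hint]]]]; auto.
  - intros u Hu; apply (is_derive_ext_loc q qe); [now apply Hnear |].
    apply Derive_correct, HEL; auto.
  - intros u Hu; rewrite Heq by lra; apply HEL; auto.
  - rewrite Heq; auto; lra.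
  - rewrite Heq; auto; lra.
  - exists H; repeat split; auto.
    + apply (ex_RInt_ext _ _ a b Hin Hex).
    + rewrite <- (RInt_ext _ _ a b Hin); auto.
Qed.

Lemma broken_sol_action s q t0 t1 t2 : 0 < s -> t0 < t1 < t2 -> broken_sol s q t0 t1 t2 ->
  exists H1 H2, 0 < H1 /\ 0 < H2 /\
    t1 - t0 = swing_time s H1 /\ t2 - t1 = swing_time s H2 /\
    action s q t0 t2 = (reduced_action s H1 - H1 * (t1 - t0))
                       + (reduced_action s H2 - H2 * (t2 - t1)).
Proof.
  intros Hs Ht [Hcont [HEL1 [HEL2 [Hq0 [Hq1 Hq2]]]]].
  destruct (EL_sol_half_swing s q t0 t1 0) as [H1 [HH1 [HT1 [Hex1 Hint1]]]]; auto; try lra.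
  { apply (continuous_on_subset (fun t => t0 <= t <= t2)); [intros; lra | auto]. }
  destruct (EL_sol_half_swing s q t1 t2 PI) as [H2 [HH2 [HT2 [Hex2 Hint2]]]]; auto; try lra.
  { apply (continuous_on_subset (fun t => t0 <= t <= t2)); [intros; lra | auto]. }
  exists H1, H2; repeat split; auto.
  unfold action; rewrite <- Hint1, <- Hint2.
  symmetry; apply (RInt_Chasles (V := R_CompleteNormedModule)); auto.
Qed.

Lemma broken_sol_action_diff s om t0 t2 bt1 tt1 (bq tq : R -> R) :
  0 < s -> 0 < om < sqrt s -> t0 < bt1 < t2 -> t0 < tt1 < t2 ->
  broken_sol s bq t0 bt1 t2 -> broken_sol s tq t0 tt1 t2 ->
  PI <= om * (bt1 - t0) -> PI <= om * (t2 - bt1) ->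
  PI <= om * (tt1 - t0) -> PI <= om * (t2 - tt1) ->
  Rabs (action s bq t0 t2 - action s tq t0 t2)
  <= 16 * Rabs (bt1 - tt1) * s * exp (- (sqrt s / om)).
Proof.
  intros Hs Hom Hb Ht Hbq Htq Ob1 Ob2 Ot1 Ot2.
  destruct (broken_sol_action s bq t0 bt1 t2) as [Hb1 [Hb2 [Pb1 [Pb2 [Tb1 [Tb2 ->]]]]]]; auto.
  destruct (broken_sol_action s tq t0 tt1 t2) as [Ht1 [Ht2 [Pt1 [Pt2 [Tt1 [Tt2 ->]]]]]]; auto.
  set (B := 8 * s * exp (- (sqrt s / om))).
  assert (HB : forall H T, 0 < H -> T = swing_time s H -> PI <= om * T -> H <= B)
    by (intros H T HH -> HT; apply energy_le_of_average_speed; auto).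
  assert (K1 := swing_action_diff_le s Hs Hb1 Ht1 Pb1 Pt1).
  assert (K2 := swing_action_diff_le s Hs Hb2 Ht2 Pb2 Pt2).
  rewrite <- Tb1, <- Tt1 in K1; rewrite <- Tb2, <- Tt2 in K2.
  replace (bt1 - t0 - (tt1 - t0)) with (bt1 - tt1) in K1 by ring.
  replace (t2 - bt1 - (t2 - tt1)) with (- (bt1 - tt1)) in K2 by ring.
  rewrite Rabs_Ropp in K2.
  assert (M1 : Rmax Hb1 Ht1 <= B) by (apply Rmax_lub; eapply HB; eauto).
  assert (M2 : Rmax Hb2 Ht2 <= B) by (apply Rmax_lub; eapply HB; eauto).
  pose proof (Rabs_pos (bt1 - tt1)).
  rewrite Tb1, Tt1, Tb2, Tt2 in *.
  match goal with
  | |- Rabs (?F1 + ?F2 - (?G1 + ?G2)) <= _ =>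
      replace (F1 + F2 - (G1 + G2)) with ((F1 - G1) + (F2 - G2)) by ring
  end.
  eapply Rle_trans; [apply Rabs_triang |].
  replace (16 * Rabs (bt1 - tt1) * s * exp (- (sqrt s / om)))
    with (B * Rabs (bt1 - tt1) + B * Rabs (bt1 - tt1)) by (unfold B; ring).
  apply Rplus_le_compat; eapply Rle_trans; eauto; apply Rmult_le_compat_r; auto.
Qed.

Lemma PI_le_mul_of_avg_speed_le (om T : R) : 0 < T -> Rabs (PI / T) <= om -> PI <= om * T.
Proof.
  intros HT Hle. pose proof PI_RGT_0.
  rewrite Rabs_right in Hle by (apply Rle_ge, Rlt_le, Rdiv_lt_0_compat; lra).
  apply (Rmult_le_compat_r T) in Hle; [| lra].
  replace (PI / T * T) with PI in Hle by (field; lra); lra.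
Qed.

Theorem lemma2p3 :
  forall a eps : R, 0 < a -> 0 < eps ->
  exists C1 C2 : R, 0 < C1 /\ 0 < C2 /\
  forall (n : nat) (t0 t2 bt1 tt1 : R) (bq tq : R -> R),
    (1 <= n)%nat ->
    t0 < t2 -> t0 < bt1 < t2 -> t0 < tt1 < t2 ->
    broken_sol (sigma_n a n) bq t0 bt1 t2 ->
    broken_sol (sigma_n a n) tq t0 tt1 t2 ->
    let om := Rmax (Rmax (Rabs (PI / (bt1 - t0))) (Rabs (PI / (t2 - bt1))))
                   (Rmax (Rabs (PI / (tt1 - t0))) (Rabs (PI / (t2 - tt1)))) in
    om < Rpower (INR n) (- (a / 2) - eps) ->
    Rabs (action (sigma_n a n) bq t0 t2 - action (sigma_n a n) tq t0 t2)
      <= C1 * Rabs (bt1 - tt1) * sigma_n a n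
           * exp (- (C2 * sqrt (sigma_n a n) / om)).
Proof.
  intros a eps Ha Heps; exists 16, 1; split; [lra | split; [lra |]].
  intros n t0 t2 bt1 tt1 bq tq Hn H02 Hb Ht Hbq Htq om Hom.
  set (s := sigma_n a n) in *.
  assert (Hn1 : 1 <= INR n) by (apply le_INR in Hn; simpl in Hn; lra).
  assert (Hs : 0 < s) by (unfold s, sigma_n, Rpower; apply exp_pos).
  assert (Hos : om < sqrt s).
  { replace (sqrt s) with (Rpower (INR n) (- (a / 2))).
    - eapply Rlt_le_trans; [apply Hom | apply Rle_Rpower; lra].
    - unfold s, sigma_n; rewrite <- Rpower_sqrt, Rpower_mult by apply exp_pos.
      f_equal; field. }
  assert (Hb1 : PI <= om * (bt1 - t0)) by (apply PI_le_mul_of_avg_speed_le; unfold om;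
    [lra | eapply Rle_trans; [apply Rmax_l | apply Rmax_l]]).
  assert (Hb2 : PI <= om * (t2 - bt1)) by (apply PI_le_mul_of_avg_speed_le; unfold om;
    [lra | eapply Rle_trans; [apply Rmax_r | apply Rmax_l]]).
  assert (Ht1 : PI <= om * (tt1 - t0)) by (apply PI_le_mul_of_avg_speed_le; unfold om;
    [lra | eapply Rle_trans; [apply Rmax_l | apply Rmax_r]]).
  assert (Ht2 : PI <= om * (t2 - tt1)) by (apply PI_le_mul_of_avg_speed_le; unfold om;
    [lra | eapply Rle_trans; [apply Rmax_r | apply Rmax_r]]).
  assert (Hom0 : 0 < om) by (pose proof PI_RGT_0; nra).
  rewrite Rmult_1_l.
  apply broken_sol_action_diff; auto; lra.
Qed.
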